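(* Let $f: D\to\{0,1\}$, $D\subseteq\{0,1\}^n$, be a non-constant $n$-bit partial Boolean function. Then $f$ can be computed exactly by a quantum 1-query algorithm if and only if there exists a vector $\vec\beta=(\beta_0,\beta_1,\dots,\beta_n)^T$ with all $\beta_i\ge 0$, $\beta_0+\beta_1+\cdots+\beta_n=1$, and $$\beta_0+\sum_{i=1}^n \beta_i(-1)^{x_i\oplus y_i}=0$$ for all $x\in\{x\in D: f(x)=0\}$ and all $y\in\{y\in D: f(y)=1\}$ (i.e. $(|F(x\oplus y)\rangle_1)^T\vec\beta=0$).
   Context: An $n$-bit partial Boolean function is a map $f:D\to\{0,1\}$ with $D\subseteq\{0,1\}^n$. For $z\in\{0,1\}^n$, $|F(z)\rangle_1=(1,(-1)^{z_1},\dots,(-1)^{z_n})^T\in\mathbb{R}^{n+1}$. A quantum 1-query algorithm works in a finite-dimensional Hilbert space with orthonormal basis $\{|i,j'\rangle\}$, where $i\in\{0,1,\dots,n\}$ and $j'$ ranges over a finite set; for input $x\in\{0,1\}^n$ the oracle is the unitary $O_x|i,j'\rangle=(-1)^{x_i}|i,j'\rangle$ for $i\in\{1,\dots,n\}$ and $O_x|0,j'\rangle=|0,j'\rangle$. The algorithm consists of an initial state $|\psi_0\rangle$, input-independent unitaries $U_0,U_1$, and a projective measurement with outcomes in $\{0,1\}$ applied to $U_1O_xU_0|\psi_0\rangle$. It computes $f$ exactly if for every $x\in D$ the outcome equals $f(x)$ with probability $1$. *)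

From HB Require Import structures.
From mathcomp Require Import all_boot all_order all_algebra.
From mathcomp Require Import complex.
From mathcomp Require Import reals.
Set Implicit Arguments. Unset Strict Implicit. Unset Printing Implicit Defensive.
Import Order.TTheory GRing.Theory Num.Theory.
Local Open Scope ring_scope.

Definition bits (n : nat) := {ffun 'I_n -> bool}.

Definition bxor (n : nat) (x y : bits n) : bits n := [ffun i => x i (+) y i].

(* The i-th entry (i = 0..n) of |F(z)>_1 = (1, (-1)^{z_1}, ..., (-1)^{z_n}),
   as an element of an arbitrary ring.  Index 0 gives 1; index (lift ord0 k)
   gives (-1)^{z_k}. *)
Definition Fsign {K : pzRingType} (n : nat) (z : bits n) (i : 'I_n.+1) : K :=
  match unlift ord0 i with
  | Some k => (-1) ^+ z k
  | None => 1
  end.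

Section Quantum.
Variable R : realType.
Local Notation C := (complex R).

(* Basis of the Hilbert space: pairs (i, j') with i in {0..n}, j' in a finite
   set of size m. *)
Definition qidx (n m : nat) := ('I_n.+1 * 'I_m)%type.

Definition qvec (n m : nat) := qidx n m -> C.
Definition qop (n m : nat) := qidx n m -> qidx n m -> C.

Definition qapply (n m : nat) (U : qop n m) (v : qvec n m) : qvec n m :=
  fun a => \sum_(b : qidx n m) U a b * v b.

Definition qnorm2 (n m : nat) (v : qvec n m) : C :=
  \sum_(a : qidx n m) v a * (v a)^*.

Definition qid (n m : nat) : qop n m := fun a b => (a == b)%:R.

Definition qmul (n m : nat) (A B : qop n m) : qop n m :=
  fun a b => \sum_(c : qidx n m) A a c * B c b.

Definition qadj (n m : nat) (A : qop n m) : qop n m := fun a b => (A b a)^*.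

Definition unitary (n m : nat) (U : qop n m) : Prop :=
  qmul U (qadj U) = qid (n:=n) (m:=m) /\ qmul (qadj U) U = qid (n:=n) (m:=m).

Definition oracle (n m : nat) (x : bits n) : qop n m :=
  fun a b => (a == b)%:R * Fsign x a.1.

Definition proj_meas (n m : nat) (P : bool -> qop n m) : Prop :=
  (forall b, qadj (P b) = P b) /\
  (forall b, qmul (P b) (P b) = P b) /\
  (forall a c, P false a c + P true a c = qid (n:=n) (m:=m) a c).

Definition outcome_prob (n m : nat) (P : bool -> qop n m) (b : bool)
  (psi : qvec n m) : C := qnorm2 (qapply (P b) psi).

Definition exact_1query (n : nat) (D : {set bits n}) (f : bits n -> bool) : Prop :=
  exists (m : nat) (psi0 : qvec n m) (U0 U1 : qop n m) (P : bool -> qop n m),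
    [/\ qnorm2 psi0 = 1, unitary U0, unitary U1, proj_meas P &
      forall x, x \in D ->
        outcome_prob P (f x) (qapply U1 (qapply (oracle (m:=m) x) (qapply U0 psi0))) = 1].
End Quantum.

From Pilot Require Import Defs.
From HB Require Import structures.
From mathcomp Require Import all_boot all_order all_algebra.
From mathcomp Require Import complex.
From mathcomp Require Import reals.
From mathcomp Require Import spectral.
From Stdlib Require Import FunctionalExtensionality.
Set Implicit Arguments. Unset Strict Implicit. Unset Printing Implicit Defensive.
Import Order.TTheory GRing.Theory Num.Theory.
Local Open Scope ring_scope.
Local Open Scope sesquilinear_scope.

(* Write phi = U0 psi0 for the state fed to the oracle and
   w_i = sum_j |phi(i,j)|^2 for its weight on the query register value i.
   The oracle only changes signs, so
     <O_x phi | O_y phi> = sum_i F(x xor y)_i w_i,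
   and U1 preserves inner products.

   (=>) If the outcome is certain on every input, the final states of a
   0-input x and a 1-input y lie in the complementary ranges of the two
   measurement projectors, hence are orthogonal; so beta := w works.
   (<=) Conversely, query with phi(i,0) = sqrt(beta_i), take U0 = U1 = 1 and
   measure with the orthogonal projector onto the span of the states O_y phi
   of the 1-inputs y: it fixes these states and, by the hypothesis on beta,
   kills every O_x phi of a 0-input x. *)

Section InnerProduct.
Variable C : numClosedFieldType.
Variable k : nat.
Implicit Types c d s t : 'cV[C]_k.

Definition inner c d : C := (c^t* *m d) 0 0.

Lemma adjM p q r (A : 'M[C]_(p, q)) (B : 'M[C]_(q, r)) :
  (A *m B)^t* = B^t* *m A^t*.
Proof. by rewrite trmx_mul map_mxM. Qed.

Lemma adj1 : (1%:M : 'M[C]_k)^t* = 1%:M.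
Proof. by apply/matrixP => i j; rewrite !mxE conjC_nat eq_sym. Qed.

Lemma inner_eq0 c : inner c c = 0 -> c = 0.
Proof.
rewrite /inner !mxE => /eqP; rewrite psumr_eq0; last first.
  by move=> i _; rewrite !mxE mulrC mul_conjC_ge0.
move=> /allP c0; apply/matrixP => i j; rewrite (ord1 j) mxE.
have := c0 i (mem_index_enum _); rewrite !mxE mulf_eq0 conjC_eq0.
by case/orP => /eqP.
Qed.

Lemma unitary_inner (U : 'M[C]_k) c d :
  U^t* *m U = 1%:M -> inner (U *m c) (U *m d) = inner c d.
Proof. by move=> hU; rewrite /inner adjM mulmxA -(mulmxA _ _ U) hU mulmx1. Qed.

Section Measurement.
Variables P Q : 'M[C]_k.
Hypotheses (P_herm : P^t* = P) (Q_herm : Q^t* = Q).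
Hypotheses (P_idem : P *m P = P) (Q_idem : Q *m Q = Q).
Hypothesis PQ_sum : P + Q = 1%:M.

(* For a Hermitian idempotent, <Pc|Pc> = <c|Pc>; the two outcome
   probabilities therefore add up to the squared norm. *)
Lemma inner_split c : inner c c = inner (P *m c) (P *m c) + inner (Q *m c) (Q *m c).
Proof.
rewrite /inner !adjM P_herm Q_herm !mulmxA -!(mulmxA _ P P) -!(mulmxA _ Q Q).
by rewrite P_idem Q_idem -[X in (X *m c) 0 0]mulmx1 -PQ_sum mulmxDr mulmxDl mxE.
Qed.

Lemma certain_outcome s :
  inner s s = 1 -> inner (P *m s) (P *m s) = 1 -> P *m s = s.
Proof.
move=> s1 Ps1; have Qs0 : Q *m s = 0.
  apply: inner_eq0; apply: (@addrI _ 1).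
  by rewrite addr0 -[in RHS]s1 (inner_split s) Ps1.
by rewrite -[RHS]mul1mx -PQ_sum mulmxDl Qs0 addr0.
Qed.

Lemma outcomes_orthogonal : P^t* *m Q = 0.
Proof.
have -> : Q = 1%:M - P by rewrite -PQ_sum addrC addKr.
by rewrite P_herm mulmxBr mulmx1 P_idem subrr.
Qed.
End Measurement.

Lemma certain_outcomes_orthogonal (P Q : 'M[C]_k) s t :
  P^t* = P -> Q^t* = Q -> P *m P = P -> Q *m Q = Q -> P + Q = 1%:M ->
  inner s s = 1 -> inner (P *m s) (P *m s) = 1 ->
  inner t t = 1 -> inner (Q *m t) (Q *m t) = 1 -> inner s t = 0.
Proof.
move=> hP hQ iP iQ PQ s1 Ps1 t1 Qt1.
have QP : Q + P = 1%:M by rewrite addrC.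
rewrite -(certain_outcome hP hQ iP iQ PQ s1 Ps1).
rewrite -(certain_outcome hQ hP iQ iP QP t1 Qt1).
by rewrite /inner adjM mulmxA -(mulmxA _ _ Q) (outcomes_orthogonal hP iP PQ) mulmx0 mul0mx mxE.
Qed.

Section OrthogonalProjector.
(* The orthogonal projector whose range is spanned by the columns of A^*
   (i.e. the vectors c with c^* in the row space of A) and whose kernel is
   {c | A c = 0}; it is built from a Gram-Schmidt basis B of that space. *)
Variables (p : nat) (A : 'M[C]_(p, k)).
Let B := schmidt (row_base A).

Definition orthoproj : 'M[C]_k := B^t* *m B.

Lemma orthonormal_basis : B *m B^t* = 1%:M.
Proof. exact/unitarymxP/schmidt_unitarymx/rank_leq_col. Qed.

Lemma basis_eqmx : (B :=: A)%MS.
Proof. exact: eqmx_trans (eqmx_schmidt_free (row_base_free A)) (eq_row_base A). Qed.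

Lemma orthoproj_herm : orthoproj^t* = orthoproj.
Proof. by rewrite /orthoproj adjM trmxCK. Qed.

Lemma orthoproj_idem : orthoproj *m orthoproj = orthoproj.
Proof. by rewrite /orthoproj mulmxA -(mulmxA _ B) orthonormal_basis mulmx1. Qed.

Lemma orthoproj_id c : (c^t* <= A)%MS -> orthoproj *m c = c.
Proof.
rewrite (eqmx_sym basis_eqmx) => /submxP [a ha].
have -> : c = B^t* *m a^t* by rewrite -adjM -ha trmxCK.
by rewrite /orthoproj -mulmxA (mulmxA B) orthonormal_basis mul1mx.
Qed.

Lemma orthoproj_0 c : A *m c = 0 -> orthoproj *m c = 0.
Proof.
move=> Ac0; have /submxP [X eB] : (B <= A)%MS by rewrite basis_eqmx.
have Bc0 : B *m c = 0 by rewrite eB -mulmxA Ac0 mulmx0.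
by rewrite /orthoproj -mulmxA Bc0 mulmx0.
Qed.
End OrthogonalProjector.

(* Two families of vectors, every member of the first orthogonal to every
   member of the second, are separated by an orthogonal projector: take the
   projector onto the span of the first family. *)
Lemma separating_projector (T : finType) (acc rej : pred T) (c : T -> 'cV[C]_k) :
  (forall y x, acc y -> rej x -> inner (c y) (c x) = 0) ->
  exists P : 'M[C]_k, [/\ P^t* = P, P *m P = P,
    forall y, acc y -> P *m c y = c y & forall x, rej x -> P *m c x = 0].
Proof.
move=> acc_rej; pose A := \matrix_(i < #|T|) if acc (enum_val i) then (c (enum_val i))^t* else 0.
exists (orthoproj A); split; [exact: orthoproj_herm | exact: orthoproj_idem | |].
- move=> y acc_y; apply: orthoproj_id.
  have -> : (c y)^t* = row (enum_rank y) A by rewrite rowK enum_rankK acc_y.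
  exact: row_sub.
- move=> x rej_x; apply: orthoproj_0; apply/matrixP => i j; rewrite (ord1 j) [RHS]mxE.
  have -> : (A *m c x) i 0 = (row i A *m c x) 0 0 by rewrite -row_mul [RHS]mxE.
  rewrite rowK; case: ifP => acc_i; first exact: acc_rej.
  by rewrite mul0mx mxE.
Qed.
End InnerProduct.

Lemma sum_enum (T : finType) (V : nmodType) (F : T -> V) :
  \sum_(a : T) F a = \sum_(i < #|T|) F (enum_val i).
Proof.
rewrite (reindex (@enum_val T T)) //=.
by exists enum_rank => x _; [apply: enum_valK | apply: enum_rankK].
Qed.

Section Representation.
(* The operators and states of Defs are functions on the finite basis
   qidx n m; enumerating the basis turns them into matrices and column
   vectors, which transports the results above. *)
Variables (R : realType) (n m : nat).
Local Notation C := R[i].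
Local Notation I := (qidx n m).
Local Notation k := #|{: I}|.

Definition M_of (Q : qop R n m) : 'M[C]_k := \matrix_(i, j) Q (enum_val i) (enum_val j).
Definition v_of (v : qvec R n m) : 'cV[C]_k := \col_i v (enum_val i).
Definition Q_of (M : 'M[C]_k) : qop R n m := fun a b => M (enum_rank a) (enum_rank b).

Definition qinner (u v : qvec R n m) : C := \sum_(a : I) (u a)^* * v a.

Lemma Q_ofK M : M_of (Q_of M) = M.
Proof. by apply/matrixP => i j; rewrite !mxE /Q_of !enum_valK. Qed.

Lemma M_of_inj : injective M_of.
Proof.
move=> A B /matrixP eqAB; apply: functional_extensionality => a.
apply: functional_extensionality => b.
by have := eqAB (enum_rank a) (enum_rank b); rewrite !mxE !enum_rankK.
Qed.

Lemma M_of_mul A B : M_of (qmul A B) = M_of A *m M_of B.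
Proof.
apply/matrixP => i j; rewrite !mxE /qmul sum_enum.
by apply: eq_bigr => l _; rewrite !mxE.
Qed.

Lemma M_of_adj A : M_of (qadj A) = (M_of A)^t*.
Proof. by apply/matrixP => i j; rewrite !mxE. Qed.

Lemma M_of_id : M_of (@qid R n m) = 1%:M.
Proof. by apply/matrixP => i j; rewrite !mxE /qid (inj_eq enum_val_inj). Qed.

Lemma v_of_apply U v : v_of (qapply U v) = M_of U *m v_of v.
Proof.
apply/matrixP => i j; rewrite !mxE /qapply sum_enum.
by apply: eq_bigr => l _; rewrite !mxE.
Qed.

Lemma qinnerE u v : qinner u v = inner (v_of u) (v_of v).
Proof. by rewrite /inner mxE /qinner sum_enum; apply: eq_bigr => l _; rewrite !mxE. Qed.

Lemma qnorm2E v : qnorm2 v = qinner v v.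
Proof. by apply: eq_bigr => a _; rewrite mulrC. Qed.

Lemma qapply_id v : qapply (@qid R n m) v = v.
Proof.
apply: functional_extensionality => a; rewrite /qapply (bigD1 a) //= /qid eqxx mul1r.
by rewrite big1 ?addr0 // => b /negbTE; rewrite eq_sym => ->; rewrite mul0r.
Qed.

Lemma qid_unitary : unitary (@qid R n m).
Proof. by split; apply: M_of_inj; rewrite M_of_mul M_of_adj M_of_id adj1 mul1mx. Qed.

Lemma qinner_unitary U u v :
  unitary U -> qinner (qapply U u) (qapply U v) = qinner u v.
Proof.
case=> _ UU; rewrite !qinnerE !v_of_apply unitary_inner //.
by rewrite -M_of_adj -M_of_mul UU M_of_id.
Qed.

Lemma outcome_probE P b s :
  outcome_prob P b s = inner (M_of (P b) *m v_of s) (M_of (P b) *m v_of s).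
Proof. by rewrite /outcome_prob qnorm2E qinnerE v_of_apply. Qed.

Lemma certain_outcomes_qorthogonal P s t :
  proj_meas P -> qnorm2 s = 1 -> outcome_prob P false s = 1 ->
  qnorm2 t = 1 -> outcome_prob P true t = 1 -> qinner s t = 0.
Proof.
case=> P_herm [P_idem P_sum]; rewrite !qnorm2E !outcome_probE !qinnerE.
have herm b : (M_of (P b))^t* = M_of (P b) by rewrite -M_of_adj P_herm.
have idem b : M_of (P b) *m M_of (P b) = M_of (P b) by rewrite -M_of_mul P_idem.
have sum1 : M_of (P false) + M_of (P true) = 1%:M.
  by rewrite -M_of_id; apply/matrixP => i j; rewrite !mxE P_sum.
exact: certain_outcomes_orthogonal (herm false) (herm true) (idem false) (idem true) sum1.
Qed.

Lemma projector_meas (P1 : 'M[C]_k) :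
  P1^t* = P1 -> P1 *m P1 = P1 ->
  proj_meas (fun b => Q_of (if b then P1 else 1%:M - P1)).
Proof.
move=> P1_herm P1_idem; split; [|split].
- move=> b; apply: M_of_inj; rewrite M_of_adj Q_ofK; case: b => //.
  by rewrite linearB /= map_mxB adj1 P1_herm.
- move=> b; apply: M_of_inj; rewrite M_of_mul Q_ofK; case: b => //.
  by rewrite mulmxBl mul1mx mulmxBr mulmx1 P1_idem subrr subr0.
- by move=> a c; rewrite /Q_of /qid !mxE addrNK (inj_eq enum_rank_inj).
Qed.
End Representation.

Section Signs.
Variable n : nat.
Implicit Types x y z : bits n.

Lemma Fsign_rmorph (K K' : pzRingType) (g : {rmorphism K -> K'}) z i :
  g (Fsign z i) = Fsign z i.
Proof. by rewrite /Fsign; case: unlift => [j|]; rewrite ?rmorphXn ?rmorphN1 ?rmorph1. Qed.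

Lemma Fsign_mul (K : pzRingType) x y i :
  (Fsign x i : K) * Fsign y i = Fsign (bxor x y) i.
Proof. by rewrite /Fsign; case: unlift => [j|]; rewrite ?mulr1 // ffunE signr_addb. Qed.

Lemma bxorxx x : bxor x x = [ffun => false].
Proof. by apply/ffunP => i; rewrite !ffunE addbb. Qed.

Lemma Fsign0 (K : pzRingType) i : (Fsign ([ffun => false] : bits n) i : K) = 1.
Proof. by rewrite /Fsign; case: unlift => [j|] //; rewrite ffunE. Qed.

Lemma bxorC x y : bxor x y = bxor y x.
Proof. by apply/ffunP => i; rewrite !ffunE addbC. Qed.
End Signs.

Section OracleInner.
Variables (R : realType) (n m : nat).
Local Notation C := R[i].

Definition weight (ph : qvec R n m) (i : 'I_n.+1) : C :=
  \sum_(j < m) (ph (i, j))^* * ph (i, j).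

Lemma weight_ge0 ph i : 0 <= weight ph i.
Proof. by apply: sumr_ge0 => j _; rewrite mulrC mul_conjC_ge0. Qed.

Lemma oracle_apply x (v : qvec R n m) :
  qapply (@oracle R n m x) v = (fun a => Fsign x a.1 * v a).
Proof.
apply: functional_extensionality => a; rewrite /qapply (bigD1 a) //= /oracle eqxx mul1r.
by rewrite big1 ?addr0 // => b /negbTE; rewrite eq_sym => ->; rewrite !mul0r.
Qed.

Lemma qinner_oracle x y (ph : qvec R n m) :
  qinner (qapply (@oracle R n m x) ph) (qapply (@oracle R n m y) ph) =
  \sum_(i < n.+1) Fsign (bxor x y) i * weight ph i.
Proof.
under eq_bigr do rewrite /weight mulr_sumr.
rewrite pair_big /=; apply: eq_bigr => -[i j] _ /=.
rewrite !oracle_apply rmorphM (Fsign_rmorph Num.conj).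
by rewrite -Fsign_mul mulrACA.
Qed.

Lemma qnorm2_weight ph : qnorm2 ph = \sum_(i < n.+1) weight ph i.
Proof. by rewrite qnorm2E /qinner /weight pair_big; apply: eq_bigr => -[i j]. Qed.

Lemma qnorm2_oracle x ph : qnorm2 (qapply (@oracle R n m x) ph) = qnorm2 ph.
Proof.
rewrite qnorm2E qinner_oracle qnorm2_weight bxorxx.
by apply: eq_bigr => i _; rewrite Fsign0 mul1r.
Qed.
End OracleInner.

Section Characterization.
Variable R : realType.
Local Open Scope complex_scope.

Lemma ge0_RRe (z : R[i]) : 0 <= z -> z = (complex.Re z)%:C.
Proof. by move=> z_ge0; rewrite RRe_real // ger0_real. Qed.

Lemma Fsign_sumC n (z : bits n) (b : 'I_n.+1 -> R) :
  (\sum_(i < n.+1) Fsign z i * b i)%:C = \sum_(i < n.+1) Fsign z i * (b i)%:C.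
Proof. by rewrite rmorph_sum; apply: eq_bigr => i _; rewrite rmorphM Fsign_rmorph. Qed.

Lemma exact_query_weights n (D : {set bits n}) (f : bits n -> bool) :
  exact_1query R D f ->
  exists beta : 'I_n.+1 -> R,
     [/\ (forall i, 0 <= beta i),
         \sum_(i < n.+1) beta i = 1 &
         forall x y, x \in D -> y \in D -> f x = false -> f y = true ->
           \sum_(i < n.+1) Fsign (bxor x y) i * beta i = 0].
Proof.
case=> m [psi0 [U0 [U1 [P [psi0_1 U0_unitary U1_unitary P_meas P_exact]]]]].
set ph := qapply U0 psi0.
have ph_1 : qnorm2 ph = 1 by rewrite qnorm2E qinner_unitary // -qnorm2E.
pose final x := qapply U1 (qapply (@oracle R n m x) ph).
have final_1 x : qnorm2 (final x) = 1.
  by rewrite qnorm2E qinner_unitary // -qnorm2E qnorm2_oracle.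
pose beta i := complex.Re (weight ph i).
have weightE i : weight ph i = (beta i)%:C by apply/ge0_RRe/weight_ge0.
exists beta; split.
- by move=> i; rewrite -ler0c -weightE weight_ge0.
- apply: complexI; rewrite rmorph_sum (eq_bigr _ (fun i _ => esym (weightE i))).
  by rewrite -qnorm2_weight ph_1.
- move=> x y xD yD fx fy; apply: complexI.
  rewrite Fsign_sumC (eq_bigr _ (fun i _ => congr1 _ (esym (weightE i)))).
  rewrite -qinner_oracle -(qinner_unitary _ _ U1_unitary).
  have final_x : outcome_prob P false (final x) = 1 by rewrite -fx; apply: P_exact.
  have final_y : outcome_prob P true (final y) = 1 by rewrite -fy; apply: P_exact.
  by rewrite rmorph0; apply: certain_outcomes_qorthogonal final_x _ final_y.
Qed.

Definition sqrt_state n (beta : 'I_n.+1 -> R) : qvec R n 1 :=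
  fun a => (Num.sqrt (beta a.1))%:C.

Lemma weight_sqrt_state n (beta : 'I_n.+1 -> R) i :
  0 <= beta i -> weight (sqrt_state beta) i = (beta i)%:C.
Proof.
move=> beta_ge0; rewrite /weight big_ord1 /sqrt_state -[Num.conj _]/(conjc _).
by rewrite conjc_real -rmorphM /= -expr2 sqr_sqrtr.
Qed.

Lemma weights_exact_query n (D : {set bits n}) (f : bits n -> bool) (beta : 'I_n.+1 -> R) :
  (forall i, 0 <= beta i) -> \sum_(i < n.+1) beta i = 1 ->
  (forall x y, x \in D -> y \in D -> f x = false -> f y = true ->
     \sum_(i < n.+1) Fsign (bxor x y) i * beta i = 0) ->
  exact_1query R D f.
Proof.
move=> beta_ge0 beta_sum beta_orth; set ph := sqrt_state beta.
have weightE i : weight ph i = (beta i)%:C by apply: weight_sqrt_state.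
have ph_1 : qnorm2 ph = 1.
  by rewrite qnorm2_weight (eq_bigr _ (fun i _ => weightE i)) -rmorph_sum beta_sum.
pose c x := v_of (qapply (@oracle R n 1 x) ph).
have c_1 x : inner (c x) (c x) = 1 by rewrite -qinnerE -qnorm2E qnorm2_oracle.
have c_orth : forall y x, (y \in D) && f y -> (x \in D) && ~~ f x -> inner (c y) (c x) = 0.
  move=> y x /andP [yD fy] /andP [xD /negbTE fx].
  rewrite -qinnerE qinner_oracle (eq_bigr _ (fun i _ => congr1 _ (weightE i))).
  by rewrite -Fsign_sumC bxorC beta_orth.
have [P1 [P1_herm P1_idem P1_acc P1_rej]] := separating_projector c_orth.
exists 1%N, ph, (@qid R n 1), (@qid R n 1), (fun b => Q_of (if b then P1 else 1%:M - P1)).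
split; [exact: ph_1 | exact: qid_unitary | exact: qid_unitary | exact: projector_meas |].
move=> x xD; rewrite !qapply_id outcome_probE Q_ofK -/(c x).
case fx: (f x).
- by rewrite P1_acc ?c_1 // xD fx.
- by rewrite mulmxBl mul1mx P1_rej ?subr0 ?c_1 // xD fx.
Qed.
End Characterization.

Theorem theorem1 (R : realType) (n : nat) (D : {set bits n}) (f : bits n -> bool) :
  (exists x y, [/\ x \in D, y \in D & f x != f y]) ->
  (exact_1query R D f <->
   exists beta : 'I_n.+1 -> R,
     [/\ (forall i, 0 <= beta i),
         \sum_(i < n.+1) beta i = 1 &
         forall x y, x \in D -> y \in D -> f x = false -> f y = true ->
           \sum_(i < n.+1) Fsign (bxor x y) i * beta i = 0]).
Proof.
move=> _; split; first exact: exact_query_weights.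
by case=> beta [beta_ge0 beta_sum beta_orth]; apply: weights_exact_query beta_orth.
Qed.
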